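(* Let $G$ be a two-player stage game and consider the mixed-pure regime. There exist a positive integer $T$ and an SPE of $G(T)$ in which locally suboptimal behavior occurs if and only if at least one of the following holds: (1) $|V_1^{m,p}|>1$, $|V_2^{m,p}|>1$, and there exist $\hat\sigma_1\in\Delta A_1,\hat a_2\in A_2$ with $(\hat\sigma_1,\hat a_2)\notin\mathrm{Nash}^{m,p}(G)$; (2) $|V_1^{m,p}|>1$, $|V_2^{m,p}|=1$, and there exist $\hat\sigma_1\in\Delta A_1$, $a_1'\in A_1$, $\hat a_2\in A_2$ such that (a) $u_1(\hat\sigma_1,\hat a_2)<u_1(a_1',\hat a_2)$, (b) $\hat a_2$ is a best response to $\hat\sigma_1$, and (c) if $|S_{\hat\sigma_1}|>1$, then, with $D=\{u_1(\sigma)-u_1(\sigma'):\sigma,\sigma'\in\mathrm{Nash}^{m,p}(G)\}$, there is $a\in S_{\hat\sigma_1}$ such that for every $a'\in S_{\hat\sigma_1}\setminus\{a\}$ there exist an integer $n_{a'}\ge0$ and $d_1^{a'},\dots,d_{n_{a'}}^{a'}\in D$ with $u_1(a,\hat a_2)-u_1(a',\hat a_2)=\sum_{k=1}^{n_{a'}}d_k^{a'}$; (3) $|V_1^{m,p}|=1$, $|V_2^{m,p}|>1$, and there exist $\hat\sigma_1\in\Delta A_1$, $\hat a_2,a_2'\in A_2$ with $u_2(\hat\sigma_1,\hat a_2)<u_2(\hat\sigma_1,a_2')$ and $\hat\sigma_1$ a best response to $\hat a_2$.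
   Context: A two-player stage game $G$ consists of finite nonempty action sets $A_1,A_2$ and payoff functions $u_1,u_2:A_1\times A_2\to\mathbb{R}$, extended to mixed strategies by expectation; $S_{\sigma_1}=\{a\in A_1:\sigma_1(a)>0\}$ is the support. In the mixed-pure regime, player 1 may use mixed strategies while player 2 is restricted to actions, both in the stage game and in every round of the repeated game (including deviations). $G(T)$ is the $T$-round repetition of $G$ with realized actions observed after each round and payoffs equal to the expected sum of stage payoffs; player 1's strategy maps histories $\bigcup_{k=0}^{T-1}(A_1\times A_2)^k$ to $\Delta A_1$ and player 2's maps histories to $A_2$. A profile is an SPE if its continuation after every history of length $k<T$ is a Nash equilibrium of $G(T-k)$ in this regime. $\mathrm{Nash}^{m,p}(G)$ is the set of $(\sigma_1,a_2)\in\Delta A_1\times A_2$ with $\sigma_1$ a best response to $a_2$ and $a_2$ a best response among actions to $\sigma_1$; $V_i^{m,p}=\{u_i(\sigma):\sigma\in\mathrm{Nash}^{m,p}(G)\}$. Locally suboptimal behavior occurs in an SPE $\mu$ of $G(T)$ if for some history $h$ of length $k<T$, $(\mu_1(h),\mu_2(h))\notin\mathrm{Nash}^{m,p}(G)$. *)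

From HB Require Import structures.
From mathcomp Require Import all_boot all_order all_algebra.
From mathcomp Require Import reals.
Set Implicit Arguments. Unset Strict Implicit. Unset Printing Implicit Defensive.
Import Order.TTheory GRing.Theory Num.Theory.
Local Open Scope ring_scope.

Section Game.
Variables (R : realType) (A1 A2 : finType).

Definition is_mixed (s : {ffun A1 -> R}) : Prop :=
  (forall a, 0 <= s a) /\ \sum_a s a = 1.

Definition eu (u : A1 -> A2 -> R) (s : {ffun A1 -> R}) (a2 : A2) : R :=
  \sum_a s a * u a a2.

Definition supp (s : {ffun A1 -> R}) : {set A1} := [set a | 0 < s a].

Definition br1 (u1 : A1 -> A2 -> R) (s : {ffun A1 -> R}) (a2 : A2) : Prop :=
  forall s', is_mixed s' -> eu u1 s' a2 <= eu u1 s a2.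
Definition br2 (u2 : A1 -> A2 -> R) (s : {ffun A1 -> R}) (a2 : A2) : Prop :=
  forall a2', eu u2 s a2' <= eu u2 s a2.

Definition NashMP (u1 u2 : A1 -> A2 -> R) (s : {ffun A1 -> R}) (a2 : A2) : Prop :=
  is_mixed s /\ br1 u1 s a2 /\ br2 u2 s a2.

Definition Vmp (u : A1 -> A2 -> R) (u1 u2 : A1 -> A2 -> R) (v : R) : Prop :=
  exists s a2, NashMP u1 u2 s a2 /\ v = eu u s a2.

Definition card_gt1 (V : R -> Prop) : Prop := exists x y, V x /\ V y /\ x <> y.
Definition card_eq1 (V : R -> Prop) : Prop := exists x, V x /\ forall y, V y -> y = x.

(* histories: chronological sequences of realized action profiles *)
Definition hist := seq (A1 * A2).
Definition strat1 := hist -> {ffun A1 -> R}.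
Definition strat2 := hist -> A2.
Definition valid1 (m1 : strat1) : Prop := forall h, is_mixed (m1 h).

Fixpoint value (u : A1 -> A2 -> R) (m1 : strat1) (m2 : strat2) (k : nat) (h : hist)
  : R :=
  match k with
  | 0 => 0
  | k'.+1 => \sum_a m1 h a * (u a (m2 h) + value u m1 m2 k' (rcons h (a, m2 h)))
  end.

Definition payoff (u : A1 -> A2 -> R) (T : nat) (m1 : strat1) (m2 : strat2) : R :=
  value u m1 m2 T [::].

Definition NashRep (u1 u2 : A1 -> A2 -> R) (T : nat) (m1 : strat1) (m2 : strat2)
  : Prop :=
  valid1 m1 /\
  (forall m1' : strat1, valid1 m1' -> payoff u1 T m1' m2 <= payoff u1 T m1 m2) /\
  (forall m2' : strat2, payoff u2 T m1 m2' <= payoff u2 T m1 m2).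

Definition cont1 (m1 : strat1) (h : hist) : strat1 := fun h' => m1 (h ++ h').
Definition cont2 (m2 : strat2) (h : hist) : strat2 := fun h' => m2 (h ++ h').

Definition SPE (u1 u2 : A1 -> A2 -> R) (T : nat) (m1 : strat1) (m2 : strat2) : Prop :=
  valid1 m1 /\
  forall h : hist, (size h < T)%N ->
    NashRep u1 u2 (T - size h) (cont1 m1 h) (cont2 m2 h).

Definition loc_subopt (u1 u2 : A1 -> A2 -> R) (T : nat) (m1 : strat1) (m2 : strat2)
  : Prop :=
  exists h : hist, (size h < T)%N /\ ~ NashMP u1 u2 (m1 h) (m2 h).

Definition Dset (u1 u2 : A1 -> A2 -> R) (d : R) : Prop :=
  exists s a2 s' a2', NashMP u1 u2 s a2 /\ NashMP u1 u2 s' a2' /\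
    d = eu u1 s a2 - eu u1 s' a2'.

Definition cond1 (u1 u2 : A1 -> A2 -> R) : Prop :=
  card_gt1 (Vmp u1 u1 u2) /\ card_gt1 (Vmp u2 u1 u2) /\
  exists s a2, is_mixed s /\ ~ NashMP u1 u2 s a2.

Definition cond2 (u1 u2 : A1 -> A2 -> R) : Prop :=
  card_gt1 (Vmp u1 u1 u2) /\ card_eq1 (Vmp u2 u1 u2) /\
  exists (s : {ffun A1 -> R}) (a1' : A1) (a2 : A2), is_mixed s /\
    eu u1 s a2 < u1 a1' a2 /\
    br2 u2 s a2 /\
    ((1 < #|supp s|)%N ->
      exists2 a, a \in supp s &
        forall a', a' \in supp s -> a' <> a ->
          exists ds : seq R, (forall i, (i < size ds)%N -> Dset u1 u2 (nth 0 ds i)) /\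
            u1 a a2 - u1 a' a2 = \sum_(d <- ds) d).

Definition cond3 (u1 u2 : A1 -> A2 -> R) : Prop :=
  card_eq1 (Vmp u1 u1 u2) /\ card_gt1 (Vmp u2 u1 u2) /\
  exists (s : {ffun A1 -> R}) (a2 a2' : A2), is_mixed s /\
    eu u2 s a2 < eu u2 s a2' /\ br1 u1 s a2.

End Game.

(* Sufficiency.  Every condition is realised by a "trigger" profile of G(L+1):
   in round 1 a prescribed non-Nash profile (s0, a0) is played, and from round 2
   on a sequence of stage Nash profiles that depends on the realised round-1
   outcome (x, y).  Playing stage Nash profiles in every round is an SPE of any
   continuation game whatever the history, so such a profile is an SPE as soon
   as round 1 satisfies the one-shot incentive constraints with the
   continuation payoffs added ([trigger_SPE]).  Those continuation payoffs are
   tuned by repeating a high and a low stage Nash payoff often enough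
   (Archimedes) and, in case (2), by a schedule of Nash profile pairs realising
   the differences required by (c) ([diff_schedule]).

   Necessity.  Take a history h of maximal length at which a non-Nash profile
   is played ([maximal_history]); every later round plays stage Nash profiles.
   If a player's Nash payoff is unique, her continuation payoff after h is
   constant, so the one-shot deviation constraint at h makes her play a stage
   best response; hence not both sets V_i are singletons.  In case (2), player
   1 is indifferent between the actions of her support at h, so the differences
   of their stage payoffs are sums of differences of Nash payoffs, namely the
   continuation payoffs along the two ensuing Nash paths ([support_diff_sum]). *)
From HB Require Import structures.
From mathcomp Require Import all_boot all_order all_algebra.
From mathcomp Require Import reals.
From Stdlib Require Import Classical.
From mathcomp Require Import lra zify.
Import Order.TTheory GRing.Theory Num.Theory.
Local Open Scope ring_scope.
Set Implicit Arguments. Unset Strict Implicit. Unset Printing Implicit Defensive.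

Section MixedStrategies.
Variables (R : realType) (A : finType).
Implicit Types (s : {ffun A -> R}) (F G : A -> R).

Definition pure (a : A) : {ffun A -> R} := [ffun b => (b == a)%:R].

Lemma pure_mixed a : is_mixed (pure a).
Proof.
split=> [b|]; first by rewrite ffunE ler0n.
rewrite (bigD1 a) //= ffunE eqxx big1 ?addr0 // => b /negbTE nb; by rewrite ffunE nb.
Qed.

Lemma sum_pure a F : \sum_b pure a b * F b = F a.
Proof.
rewrite (bigD1 a) //= ffunE eqxx mul1r big1 ?addr0 // => b /negbTE nb.
by rewrite ffunE nb mul0r.
Qed.

Lemma mixed_const s c : is_mixed s -> \sum_b s b * c = c.
Proof. by move=> [_ s1]; rewrite -mulr_suml s1 mul1r. Qed.

Lemma mixed_le s F c : is_mixed s -> (forall b, F b <= c) -> \sum_b s b * F b <= c.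
Proof.
move=> ms H; rewrite -[leRHS](mixed_const c ms).
by apply: ler_sum => b _; apply: ler_wpM2l => //; case: ms.
Qed.

Lemma supp_nonempty s : is_mixed s -> exists b, b \in supp s.
Proof.
move=> [s0 s1]; apply: NNPP => N.
have : \sum_b s b = 0.
  apply: big1 => b _; apply/eqP; rewrite eq_le s0 andbT leNgt; apply/negP => sb.
  by apply: N; exists b; rewrite inE.
by rewrite s1 => /eqP; rewrite oner_eq0.
Qed.

Lemma mixed_supp_eq s F : is_mixed s -> (forall b, F b <= \sum_b' s b' * F b') ->
  forall b, b \in supp s -> F b = \sum_b' s b' * F b'.
Proof.
move=> [s0 s1] H b; rewrite inE => sb.
set V := \sum_b' s b' * F b' in H *.
have E : \sum_b' s b' * (V - F b') = 0.
  under eq_bigr do rewrite mulrBr.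
  by rewrite sumrB -mulr_suml s1 mul1r subrr.
have Hp i : predT i -> 0 <= s i * (V - F i) by move=> _; rewrite mulr_ge0 ?subr_ge0.
move: (psumr_eq0P Hp E (i:=b) isT) => /eqP.
by rewrite mulf_eq0 (gt_eqF sb) /= subr_eq0 => /eqP.
Qed.

Lemma supp_sum s F G : is_mixed s ->
  (forall b, b \in supp s -> F b = G b) -> \sum_b s b * F b = \sum_b s b * G b.
Proof.
move=> [s0 _] H; apply: eq_bigr => b _.
case: (boolP (b \in supp s)) => [/H -> //|]; rewrite inE -leNgt => sb.
have -> : s b = 0 by apply/eqP; rewrite eq_le sb s0.
by rewrite !mul0r.
Qed.

End MixedStrategies.

Lemma sum_le_norm (R : realType) (I : finType) (F : I -> R) i : F i <= \sum_j `|F j|.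
Proof.
rewrite (bigD1 i) //=; apply: (le_trans (ler_norm _)).
by rewrite lerDl sumr_ge0.
Qed.

Lemma archimedes_nat (R : realType) (B x y : R) : x < y -> exists K : nat, B <= K%:R * (y - x).
Proof.
rewrite -subr_gt0 => gap; exists (Num.truncn (B / (y - x))).+1.
by rewrite -ler_pdivrMr //; apply: ltW; exact: truncnS_gt.
Qed.

Lemma sum_const_ord (R : realType) (c : R) n : \sum_(i < n) c = n%:R * c.
Proof. by rewrite sumr_const card_ord mulr_natl. Qed.

Lemma card_gt1_or_eq1 (R : realType) (V : R -> Prop) :
  (exists v, V v) -> card_gt1 V \/ card_eq1 V.
Proof.
move=> [v Vv]; case: (classic (forall y, V y -> y = v)) => H; first by right; exists v.
left; have [y Hy] : exists y, ~ (V y -> y = v).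
  by apply: NNPP => N; apply: H => y; apply: NNPP => N'; apply: N; exists y.
exists v, y; split => //; split; first by apply: NNPP => N; apply: Hy.
by move=> E; apply: Hy => _; rewrite E.
Qed.

Lemma maximal_history (X : Type) (Q : seq X -> Prop) (T : nat) :
  (exists h, (size h < T)%N /\ ~ Q h) ->
  exists h, (size h < T)%N /\ ~ Q h /\
    forall x, x <> [::] -> (size (h ++ x) < T)%N -> Q (h ++ x).
Proof.
move=> [h0 H0].
suff S n h : (T - size h <= n)%N -> (size h < T)%N /\ ~ Q h -> exists h,
    (size h < T)%N /\ ~ Q h /\ forall x, x <> [::] -> (size (h ++ x) < T)%N -> Q (h ++ x).
  exact: (S (T - size h0)%N h0 (leqnn _) H0).
elim: n h => [|n IH] h Hn [Hs HQ]; first by move: Hn; rewrite leqn0 subn_eq0 leqNgt Hs.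
case: (classic (forall x, x <> [::] -> (size (h ++ x) < T)%N -> Q (h ++ x))) => H.
  by exists h.
have [x Hx] : exists x, ~ (x <> [::] -> (size (h ++ x) < T)%N -> Q (h ++ x)).
  by apply: NNPP => N; apply: H => x; apply: NNPP => N'; apply: N; exists x.
have nx : x <> [::] by move=> E; apply: Hx => /(_ E).
have sx : (size (h ++ x) < T)%N by apply: NNPP => N; apply: Hx => _ /N.
apply: (IH (h ++ x)) => //; last by split => // q; apply: Hx.
by rewrite size_cat; case: x nx {Hx sx} => [//|z x] _ /=; lia.
Qed.

Lemma sum_zip_diff (R : realType) (X : Type) (f : X -> R) (p q : seq X) : size p = size q ->
  \sum_(x <- zip p q) (f x.1 - f x.2) = \sum_(x <- p) f x - \sum_(x <- q) f x.
Proof.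
elim: p q => [|x p IH] [|y q] //=; first by rewrite !big_nil subrr.
by move=> [E]; rewrite !big_cons IH //=; lra.
Qed.

Section Game.
Variables (R : realType) (A1 A2 : finType) (u1 u2 : A1 -> A2 -> R).
Local Notation prof := ({ffun A1 -> R} * A2)%type.
Local Notation hist := (hist A1 A2).
Local Notation strat1 := (strat1 R A1 A2).
Local Notation strat2 := (strat2 A1 A2).

Definition EU (u : A1 -> A2 -> R) (p : prof) : R := eu u p.1 p.2.
Definition NashP (p : prof) : Prop := NashMP u1 u2 p.1 p.2.

Lemma eu_pure (u : A1 -> A2 -> R) a y : eu u (pure R a) y = u a y.
Proof. exact: sum_pure. Qed.

Lemma br1_pure (s : {ffun A1 -> R}) y : br1 u1 s y -> forall b, u1 b y <= eu u1 s y.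
Proof. by move=> H b; rewrite -eu_pure; apply/H/pure_mixed. Qed.

Lemma pure_br1 (s : {ffun A1 -> R}) y :
  (forall b, u1 b y <= eu u1 s y) -> br1 u1 s y.
Proof. by move=> H s' ms'; apply: mixed_le. Qed.

Lemma br1_supp (s : {ffun A1 -> R}) y : is_mixed s -> br1 u1 s y ->
  forall b, b \in supp s -> u1 b y = eu u1 s y.
Proof. by move=> ms H; apply: (mixed_supp_eq (F := u1^~ y) ms (br1_pure H)). Qed.

Lemma gt1_high_low (u : A1 -> A2 -> R) : card_gt1 (Vmp u u1 u2) ->
  exists N N', NashP N /\ NashP N' /\ EU u N' < EU u N.
Proof.
move=> [x [y [[s [a [Ns ->]]] [[s' [a' [Ns' ->]]] ne]]]].
case: (ltgtP (eu u s a) (eu u s' a')) => H //.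
- by exists (s', a'), (s, a).
- by exists (s, a), (s', a').
Qed.

Lemma eq1_const (u : A1 -> A2 -> R) : card_eq1 (Vmp u u1 u2) ->
  exists v, forall N, NashP N -> EU u N = v.
Proof. by move=> [v [_ H]]; exists v => N NN; apply: H; exists N.1, N.2. Qed.

Lemma value_cont (u : A1 -> A2 -> R) (m1 : strat1) (m2 : strat2) k h g :
  value u m1 m2 k (h ++ g) = value u (cont1 m1 h) (cont2 m2 h) k g.
Proof.
elim: k g => [|k IH] g //=.
by apply: eq_bigr => b _; rewrite -IH rcons_cat.
Qed.

Lemma value_agree (u : A1 -> A2 -> R) (m1 m1' : strat1) (m2 m2' : strat2) k h :
  (forall g, m1' (h ++ g) = m1 (h ++ g)) -> (forall g, m2' (h ++ g) = m2 (h ++ g)) ->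
  value u m1' m2' k h = value u m1 m2 k h.
Proof.
elim: k h => [|k IH] h H1 H2 //=.
move: (H1 [::]) (H2 [::]); rewrite !cats0 => -> ->; apply: eq_bigr => b _.
by rewrite IH // => g; rewrite cat_rcons.
Qed.

(* Playing, in round i of the remaining game, a stage Nash profile Q (size g)
   determined by the current length of the history is a Nash equilibrium of
   every continuation game: deviations never pay in any single round. *)
Section NashPath.
Variables (n1 : strat1) (n2 : strat2) (Q : nat -> prof).
Hypothesis n1Q : forall g, n1 g = (Q (size g)).1.
Hypothesis n2Q : forall g, n2 g = (Q (size g)).2.
Hypothesis QNash : forall j, NashP (Q j).

Let n1_mixed g : is_mixed (n1 g).
Proof. by rewrite n1Q; case: (QNash (size g)). Qed.

Lemma value_path (u : A1 -> A2 -> R) k g :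
  value u n1 n2 k g = \sum_(i < k) EU u (Q (size g + i)%N).
Proof.
elim: k g => [|k IH] g; first by rewrite big_ord0.
rewrite /= big_ord_recl addn0.
under eq_bigr do rewrite IH size_rcons mulrDr.
rewrite big_split /= mixed_const // n1Q n2Q; congr (_ + _).
by apply: eq_bigr => i _; rewrite addSnnS.
Qed.

Lemma path_dev1 (n1' : strat1) : valid1 n1' -> forall k g,
  value u1 n1' n2 k g <= \sum_(i < k) EU u1 (Q (size g + i)%N).
Proof.
move=> v1; elim=> [|k IH] g; first by rewrite big_ord0.
rewrite /= big_ord_recl addn0.
apply: le_trans (_ : \sum_b n1' g b * (u1 b (n2 g) +
    \sum_(i < k) EU u1 (Q (size g + i.+1)%N)) <= _).
  apply: ler_sum => b _; apply: ler_wpM2l; first by case: (v1 g).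
  by rewrite lerD2l; apply: le_trans (IH _) _; rewrite size_rcons; under eq_bigr do rewrite addSnnS.
under eq_bigr do rewrite mulrDr.
rewrite big_split /= mixed_const // lerD2r n2Q.
by case: (QNash (size g)) => _ [+ _]; apply.
Qed.

Lemma path_dev2 (n2' : strat2) : forall k g,
  value u2 n1 n2' k g <= \sum_(i < k) EU u2 (Q (size g + i)%N).
Proof.
elim=> [|k IH] g; first by rewrite big_ord0.
rewrite /= big_ord_recl addn0.
apply: le_trans (_ : \sum_b n1 g b * (u2 b (n2' g) +
    \sum_(i < k) EU u2 (Q (size g + i.+1)%N)) <= _).
  apply: ler_sum => b _; apply: ler_wpM2l; first by case: (n1_mixed g).
  by rewrite lerD2l; apply: le_trans (IH _) _; rewrite size_rcons; under eq_bigr do rewrite addSnnS.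
under eq_bigr do rewrite mulrDr.
rewrite big_split /= mixed_const // lerD2r /EU n1Q.
by case: (QNash (size g)) => _ [_]; apply.
Qed.

Lemma NashRep_path k : NashRep u1 u2 k n1 n2.
Proof.
split; first exact: n1_mixed.
split=> [m1' v1|m2']; rewrite /payoff value_path;
  [exact: path_dev1 | exact: path_dev2].
Qed.
End NashPath.

(* The trigger profile of G(L+1): (s0, a0) is played in round 1, then the
   stage Nash path P x y selected by the realised round-1 outcome (x, y). *)
Section Trigger.
Variables (s0 : {ffun A1 -> R}) (a0 : A2) (P : A1 -> A2 -> nat -> prof) (L : nat).
Hypothesis s0_mixed : is_mixed s0.
Hypothesis PNash : forall x y i, NashP (P x y i).

Definition trigger1 : strat1 := fun h =>
  if h is p :: r then (P p.1 p.2 (size r)).1 else s0.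
Definition trigger2 : strat2 := fun h =>
  if h is p :: r then (P p.1 p.2 (size r)).2 else a0.

Definition contW (u : A1 -> A2 -> R) x y : R := \sum_(i < L) EU u (P x y i).

Hypothesis incentive1 : forall b,
  u1 b a0 + contW u1 b a0 <= \sum_b' s0 b' * (u1 b' a0 + contW u1 b' a0).
Hypothesis incentive2 : forall y,
  \sum_b s0 b * (u2 b y + contW u2 b y) <= \sum_b s0 b * (u2 b a0 + contW u2 b a0).

Lemma trigger_value (u : A1 -> A2 -> R) b y :
  value u trigger1 trigger2 L [:: (b, y)] = contW u b y.
Proof.
by rewrite -[[:: _]]cats0 value_cont (@value_path _ _ (P b y)).
Qed.

Lemma trigger_dev1 (m1 : strat1) b : valid1 m1 ->
  value u1 m1 trigger2 L [:: (b, a0)] <= contW u1 b a0.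
Proof.
move=> v1; rewrite -[[:: _]]cats0 value_cont.
by apply: (@path_dev1 _ (P b a0)) => // g; apply: v1.
Qed.

Lemma trigger_dev2 (m2 : strat2) b y : value u2 trigger1 m2 L [:: (b, y)] <= contW u2 b y.
Proof. by rewrite -[[:: _]]cats0 value_cont; apply: (@path_dev2 _ (P b y)). Qed.

(* Subgame perfection: after round 1 by [NashRep_path], in round 1 by the
   incentive constraints. *)
Lemma trigger_SPE : SPE u1 u2 L.+1 trigger1 trigger2.
Proof.
have valid : valid1 trigger1 by case=> [|p r] //=; case: (PNash p.1 p.2 (size r)).
split=> // -[_|p r _]; last first.
  apply: (@NashRep_path _ _ (fun j => P p.1 p.2 (size r + j)%N)) => // g.
    by rewrite /cont1 /= size_cat.
  by rewrite /cont2 /= size_cat.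
rewrite subn0 (_ : cont1 _ _ = trigger1) // (_ : cont2 _ _ = trigger2) //.
split=> //; split=> [m1' v1|m2']; rewrite /payoff /=; under [leRHS]eq_bigr do rewrite trigger_value.
- apply: le_trans (mixed_le (v1 [::]) incentive1).
  apply: ler_sum => b _; apply: ler_wpM2l; first by case: (v1 [::]).
  by rewrite lerD2l; apply: trigger_dev1.
- apply: le_trans (incentive2 (m2' [::])).
  apply: ler_sum => b _; apply: ler_wpM2l; first by case: s0_mixed.
  by rewrite lerD2l; apply: trigger_dev2.
Qed.
End Trigger.

Definition subopt_SPE_exists : Prop :=
  exists T : nat, (0 < T)%N /\
    exists (m1 : strat1) (m2 : strat2), SPE u1 u2 T m1 m2 /\ loc_subopt u1 u2 T m1 m2.

Lemma trigger_subopt s0 a0 P L : ~ NashMP u1 u2 s0 a0 ->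
  is_mixed s0 -> (forall x y i, NashP (P x y i)) ->
  (forall b, u1 b a0 + contW P L u1 b a0 <= \sum_b' s0 b' * (u1 b' a0 + contW P L u1 b' a0)) ->
  (forall y, \sum_b s0 b * (u2 b y + contW P L u2 b y) <=
             \sum_b s0 b * (u2 b a0 + contW P L u2 b a0)) ->
  subopt_SPE_exists.
Proof.
move=> nN ms PN C1 C2; exists L.+1; split => //.
by exists (trigger1 s0 P), (trigger2 a0 P); split; [apply: trigger_SPE | exists [::]].
Qed.

Lemma sum_phases (u : A1 -> A2 -> R) (Q : nat -> prof) (N : prof) S K :
  \sum_(i < S + K) EU u (if (i < S)%N then Q i else N) =
  \sum_(i < S) EU u (Q i) + K%:R * EU u N.
Proof.
rewrite big_split_ord /= -sum_const_ord; congr (_ + _); apply: eq_bigr => i _.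
  by rewrite ltn_ord.
by rewrite ltnNge leq_addr.
Qed.

Lemma pure_not_Nash : (exists s a2, is_mixed s /\ ~ NashMP u1 u2 s a2) ->
  exists a1 a2, ~ NashMP u1 u2 (pure R a1) a2.
Proof.
move=> [s [a2 [ms NN]]]; apply: NNPP => H; apply: NN.
have HN a1 y : NashMP u1 u2 (pure R a1) y by apply: NNPP => N; apply: H; exists a1, y.
have E1 b b' y : u1 b y = u1 b' y.
  have [_ [h1 _]] := HN b y; have [_ [h1' _]] := HN b' y.
  move: (br1_pure h1 b') (br1_pure h1' b); rewrite !eu_pure => ? ?.
  by apply/eqP; rewrite eq_le; apply/andP.
have E2 b y y' : u2 b y = u2 b y'.
  have [_ [_ h2]] := HN b y; have [_ [_ h2']] := HN b y'.
  move: (h2 y') (h2' y); rewrite !eu_pure => ? ?.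
  by apply/eqP; rewrite eq_le; apply/andP.
split => //; split => [|y]; last by rewrite /eu; under eq_bigr do rewrite (E2 _ y a2).
by apply: pure_br1 => b; rewrite /eu; under eq_bigr do rewrite (E1 _ b); rewrite mixed_const.
Qed.

(* Condition (1): after the pure non-Nash profile (a1, a2), K = K1 + K2 rounds
   of player 1's good (resp. bad) Nash profile follow if she played (resp. did
   not play) a1, then K rounds of player 2's good (resp. bad) Nash profile if
   she played (resp. did not play) a2. *)
Lemma cond1_sufficient : cond1 u1 u2 -> subopt_SPE_exists.
Proof.
move=> [/gt1_high_low [N1 [N1' [NN1 [NN1' gap1]]]]].
move=> [/gt1_high_low [N2 [N2' [NN2 [NN2' gap2]]]] /pure_not_Nash [a1 [a2 nN]]].
have [K1 HK1] := archimedes_nat (\sum_b `|u1 b a2 - u1 a1 a2|) gap1.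
have [K2 HK2] := archimedes_nat (\sum_y `|u2 a1 y - u2 a1 a2|) gap2.
pose K := (K1 + K2)%N.
pose P x y (i : nat) :=
  if (i < K)%N then (if x == a1 then N1 else N1') else (if y == a2 then N2 else N2').
have W u b y : contW P (K + K) u b y =
    K%:R * EU u (if b == a1 then N1 else N1') + K%:R * EU u (if y == a2 then N2 else N2').
  by rewrite /contW /P (sum_phases _ (fun _ => if b == a1 then N1 else N1')) sum_const_ord.
apply: (@trigger_subopt (pure R a1) a2 P (K + K)) => //; first exact: pure_mixed.
- by move=> x y i; rewrite /P; case: ifP => _; case: ifP.
- move=> b; rewrite sum_pure !W eqxx.
  case: (eqVneq b a1) => [->|nb]; rewrite eqxx; first exact: lexx.
  have H1 := le_trans (sum_le_norm (fun b => u1 b a2 - u1 a1 a2) b) HK1.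
  have H2 : 0 <= K2%:R * (EU u1 N1 - EU u1 N1') by rewrite mulr_ge0 // subr_ge0 ltW.
  by rewrite /K natrD !mulrDl; rewrite !mulrBr in H1 H2; lra.
- move=> y; rewrite !sum_pure !W eqxx.
  case: (eqVneq y a2) => [->|ny]; rewrite eqxx; first exact: lexx.
  have H1 := le_trans (sum_le_norm (fun y => u2 a1 y - u2 a1 a2) y) HK2.
  have H2 : 0 <= K1%:R * (EU u2 N2 - EU u2 N2') by rewrite mulr_ge0 // subr_ge0 ltW.
  by rewrite /K natrD !mulrDl; rewrite !mulrBr in H1 H2; lra.
Qed.

(* Condition (3): player 1's continuation payoff is constant, and player 2 is
   rewarded by K rounds of her good Nash profile for playing a2. *)
Lemma cond3_sufficient : cond3 u1 u2 -> subopt_SPE_exists.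
Proof.
move=> [/eq1_const [v1 Hv1] [/gt1_high_low [N [N' [NN [NN' gap]]]]]].
move=> [s [a2 [a2' [ms [lt br]]]]].
have [K HK] := archimedes_nat (\sum_y `|eu u2 s y - eu u2 s a2|) gap.
pose P (x : A1) y (i : nat) := if y == a2 then N else N'.
have W1 b y : contW P K u1 b y = K%:R * v1.
  by rewrite /contW -sum_const_ord; apply: eq_bigr => i _; apply: Hv1; rewrite /P; case: ifP.
have W2 b y : contW P K u2 b y = K%:R * EU u2 (if y == a2 then N else N').
  by rewrite /contW /P sum_const_ord.
apply: (@trigger_subopt s a2 P K) => //.
- by move=> [_ [_ /(_ a2')]]; rewrite leNgt lt.
- by move=> x y i; rewrite /P; case: ifP.
- move=> b; under eq_bigr do rewrite W1 mulrDr.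
  by rewrite W1 big_split /= mixed_const // lerD2r; apply: br1_pure.
- move=> y; under eq_bigr do rewrite W2 mulrDr.
  under [leRHS]eq_bigr do rewrite W2 mulrDr.
  rewrite !big_split /= !mixed_const // eqxx; case: eqP => [-> //|_].
  have H1 := le_trans (sum_le_norm (fun y => eu u2 s y - eu u2 s a2) y) HK.
  by rewrite /= mulrBr /eu in H1; rewrite /eu; lra.
Qed.

Lemma Dsum_pairs (ds : seq R) : (forall i, (i < size ds)%N -> Dset u1 u2 (nth 0 ds i)) ->
  exists l : seq (prof * prof), (forall t, t \in l -> NashP t.1 /\ NashP t.2) /\
    \sum_(d <- ds) d = \sum_(t <- l) (EU u1 t.1 - EU u1 t.2).
Proof.
elim: ds => [|d ds IH] H; first by exists [::]; rewrite !big_nil.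
move: (H 0%N isT) => /= [s [a [s' [a' [Ns [Ns' ->]]]]]].
have [l [Hl E]] := IH (fun i => H i.+1).
exists (((s, a), (s', a')) :: l); split; last by rewrite !big_cons E.
by move=> t; rewrite inE => /orP [/eqP -> //|/Hl].
Qed.

(* Condition (c), extended to supports of size one (where it is vacuous), and
   recast as a family of lists of pairs of Nash profiles indexed by actions. *)
Lemma support_diff_lists (s : {ffun A1 -> R}) a2 : is_mixed s ->
  ((1 < #|supp s|)%N -> exists2 a, a \in supp s &
     forall a', a' \in supp s -> a' <> a ->
       exists ds : seq R, (forall i, (i < size ds)%N -> Dset u1 u2 (nth 0 ds i)) /\
         u1 a a2 - u1 a' a2 = \sum_(d <- ds) d) ->
  exists2 a, a \in supp s &
    exists f : A1 -> seq (prof * prof), forall b,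
      (forall t, t \in f b -> NashP t.1 /\ NashP t.2) /\
      (b \in supp s -> u1 a a2 - u1 b a2 = \sum_(t <- f b) (EU u1 t.1 - EU u1 t.2)).
Proof.
move=> ms c; have [a asupp Hc] : exists2 a, a \in supp s &
    forall a', a' \in supp s -> a' <> a -> exists ds : seq R,
      (forall i, (i < size ds)%N -> Dset u1 u2 (nth 0 ds i)) /\
      u1 a a2 - u1 a' a2 = \sum_(d <- ds) d.
  case: (ltnP 1 #|supp s|) => [/c //|small].
  have [a Ha] := supp_nonempty ms; exists a => // a' Ha' ne; exfalso.
  have : (#|[set a; a']| <= #|supp s|)%N.
    by apply: subset_leq_card; apply/subsetP => x; rewrite in_set2 => /orP [] /eqP ->.
  rewrite cards2; case: eqP => [E _|_ /= two]; first by apply: ne; rewrite E.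
  by have := leq_trans two small.
suff /fin_all_exists [f Hf] : forall b, exists l : seq (prof * prof),
    (forall t, t \in l -> NashP t.1 /\ NashP t.2) /\
    (b \in supp s -> u1 a a2 - u1 b a2 = \sum_(t <- l) (EU u1 t.1 - EU u1 t.2)).
  by exists a => //; exists f.
move=> b; case: (eqVneq b a) => [->|nb]; first by exists [::]; rewrite subrr big_nil.
case: (boolP (b \in supp s)) => [bs|nbs]; last by exists [::].
have [ds [Hds E]] := Hc b bs (elimN eqP nb).
by have [l [Hl El]] := Dsum_pairs Hds; exists l; rewrite E El.
Qed.

(* Given, for each action x, a list f x of pairs of Nash profiles, there is a
   common number S of rounds and, for each x, S Nash profiles whose total
   payoff is a constant C plus the sum of the differences listed in f x: play
   through all pairs of all lists, taking the first profile of a pair exactly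
   when the pair belongs to f x. *)
Lemma diff_schedule (u : A1 -> A2 -> R) (f : A1 -> seq (prof * prof)) :
  (forall x t, t \in f x -> NashP t.1 /\ NashP t.2) ->
  exists (S : nat) (Q : A1 -> seq prof) (C : R), forall x,
    [/\ size (Q x) = S, (forall p, p \in Q x -> NashP p) &
        \sum_(p <- Q x) EU u p = C + \sum_(t <- f x) (EU u t.1 - EU u t.2)].
Proof.
move=> fN; pose sl := flatten [seq [seq (b, t) | t <- f b] | b <- enum A1].
have slN q : q \in sl -> NashP q.2.1 /\ NashP q.2.2.
  by move=> /flattenP [r /mapP [b _ ->] /mapP [t tin ->]]; apply: fN tin.
pose Q x := [seq (if x == q.1 then q.2.1 else q.2.2) | q <- sl].
exists (size sl), Q, (\sum_(q <- sl) EU u q.2.2) => x; split.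
- by rewrite size_map.
- by move=> p /mapP [q /slN [N1 N2] ->]; case: ifP.
rewrite big_map (eq_bigr (fun q => EU u q.2.2 + (x == q.1)%:R * (EU u q.2.1 - EU u q.2.2)));
  last by move=> q _; case: eqP => _; rewrite ?mul1r ?mul0r ?addr0 // addrC subrK.
rewrite big_split /=; congr (_ + _).
rewrite big_flatten /= big_map; under eq_bigr do rewrite big_map /= -mulr_sumr.
rewrite big_enum /= (bigD1 x) //= eqxx mul1r [X in _ + X]big1 ?addr0 // => b nb.
by rewrite eq_sym (negbTE nb) mul0r.
Qed.

(* Condition (2): every action of the support is made equally attractive to
   player 1 by a schedule realising the differences of (c), followed by K
   rounds of her good Nash profile for support actions and of her bad one for
   the others; player 2's continuation payoff is constant. *)
Lemma cond2_sufficient : cond2 u1 u2 -> subopt_SPE_exists.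
Proof.
move=> [/gt1_high_low [N1 [N1' [NN1 [NN1' gap1]]]] [/eq1_const [v2 Hv2]]].
move=> [s [a1' [a2 [ms [lt [br c]]]]]].
have [a asupp [f Hf]] := support_diff_lists ms c.
have [S [Q [C HQ]]] := diff_schedule u1 (fun x => (Hf x).1).
pose D x := \sum_(t <- f x) (EU u1 t.1 - EU u1 t.2).
have [K HK] := archimedes_nat (\sum_b `|u1 b a2 - u1 a a2 + D b|) gap1.
pose P (x : A1) (y : A2) (i : nat) :=
  if (i < S)%N then nth N1 (Q x) i else (if x \in supp s then N1 else N1').
have PN x y i : NashP (P x y i).
  rewrite /P; case: ifP => [iS|_]; last by case: ifP.
  by have [sQ QN _] := HQ x; apply/QN/mem_nth; rewrite sQ.
have W1 x y : contW P (S + K) u1 x y =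
    C + D x + K%:R * EU u1 (if x \in supp s then N1 else N1').
  have [sQ _ <-] := HQ x.
  rewrite /contW /P (sum_phases _ (fun i => nth N1 (Q x) i)).
  by rewrite (big_nth N1) sQ big_mkord.
have W2 x y : contW P (S + K) u2 x y = (S + K)%:R * v2.
  by rewrite /contW -sum_const_ord; apply: eq_bigr => i _; apply: Hv2.
have Wsupp b : b \in supp s ->
    u1 b a2 + contW P (S + K) u1 b a2 = u1 a a2 + (C + K%:R * EU u1 N1).
  by move=> bs; rewrite W1 bs /D -(Hf b).2 //; lra.
apply: (@trigger_subopt s a2 P (S + K)) => //.
- by move=> [_ [/br1_pure /(_ a1')]]; rewrite leNgt lt.
- move=> b; rewrite (supp_sum (G := fun=> u1 a a2 + (C + K%:R * EU u1 N1))) //.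
  rewrite mixed_const //; case: (boolP (b \in supp s)) => bs; first by rewrite Wsupp.
  rewrite W1 (negbTE bs).
  have := le_trans (sum_le_norm (fun b => u1 b a2 - u1 a a2 + D b) b) HK.
  by rewrite /= mulrBr; lra.
- move=> y; under eq_bigr do rewrite W2 mulrDr.
  under [leRHS]eq_bigr do rewrite W2 mulrDr.
  by rewrite !big_split /= !mixed_const // lerD2r; apply: br.
Qed.

Lemma value_unique_Nash (u : A1 -> A2 -> R) v (m1 : strat1) (m2 : strat2) :
  (forall N, NashP N -> EU u N = v) ->
  forall k g, (forall x, (size x < k)%N -> NashMP u1 u2 (m1 (g ++ x)) (m2 (g ++ x))) ->
  value u m1 m2 k g = k%:R * v.
Proof.
move=> Hv; elim=> [|k IH] g H; first by rewrite mul0r.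
have Hg : NashMP u1 u2 (m1 g) (m2 g) by have := H [::] isT; rewrite cats0.
have E b : value u m1 m2 k (rcons g (b, m2 g)) = k%:R * v.
  by apply: IH => x hx; rewrite cat_rcons; apply: H.
rewrite /=; under eq_bigr do rewrite E mulrDr.
rewrite big_split /= mixed_const; last by case: Hg.
by move: (Hv (m1 g, m2 g) Hg); rewrite /EU /eu /= => ->; rewrite -nat1r mulrDl mul1r.
Qed.

Section SubgamePerfect.
Variables (T : nat) (m1 : strat1) (m2 : strat2).
Hypothesis spe : SPE u1 u2 T m1 m2.

Lemma value_step (u : A1 -> A2 -> R) (n1 : strat1) (n2 : strat2) g k c y :
  value u (cont1 n1 g) (cont2 n2 g) k [:: (c, y)] = value u n1 n2 k (rcons g (c, y)).
Proof. by rewrite -cats1 value_cont. Qed.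

Lemma one_shot1 g k : (T - size g)%N = k.+1 -> forall b,
  u1 b (m2 g) + value u1 m1 m2 k (rcons g (b, m2 g)) <= value u1 m1 m2 k.+1 g.
Proof.
move=> Hk b; have sg : (size g < T)%N by rewrite -subn_gt0 Hk.
have [v1 [dev1 _]] := spe.2 g sg.
rewrite Hk in dev1.
pose m1' : strat1 := fun x => if x is [::] then pure R b else cont1 m1 g x.
have vm : valid1 m1' by case=> [|p x] /=; [apply: pure_mixed | apply: v1].
have := dev1 m1' vm; rewrite /payoff /= sum_pure.
rewrite (@value_agree u1 (cont1 m1 g) m1' (cont2 m2 g) (cont2 m2 g)) // value_step.
by under eq_bigr do rewrite value_step; rewrite /cont1 /cont2 !cats0.
Qed.

Lemma one_shot2 g k : (T - size g)%N = k.+1 -> forall y,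
  \sum_b m1 g b * (u2 b y + value u2 m1 m2 k (rcons g (b, y))) <= value u2 m1 m2 k.+1 g.
Proof.
move=> Hk y; have sg : (size g < T)%N by rewrite -subn_gt0 Hk.
have [_ [_ dev2]] := spe.2 g sg.
rewrite Hk in dev2.
pose m2' : strat2 := fun x => if x is [::] then y else cont2 m2 g x.
have := dev2 m2'; rewrite /payoff /=.
under eq_bigr do rewrite (@value_agree u2 (cont1 m1 g) (cont1 m1 g) (cont2 m2 g) m2') //
  value_step.
by under [in X in _ <= X -> _]eq_bigr do rewrite value_step; rewrite /cont1 /cont2 !cats0.
Qed.

Lemma last_round_Nash g : (T - size g)%N = 1%N -> NashMP u1 u2 (m1 g) (m2 g).
Proof.
move=> Hk; split; first exact: spe.1.
split => [|y].
- apply: pure_br1 => b; move: (one_shot1 Hk b) => /=.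
  by under eq_bigr do rewrite addr0; rewrite addr0.
- move: (one_shot2 Hk y) => /=.
  by under eq_bigr do rewrite addr0; under [in X in _ <= X -> _]eq_bigr do rewrite addr0.
Qed.

(* If the last j rounds after g play stage Nash profiles, player 1's value is
   the total payoff of a path of j Nash profiles: by indifference on the
   support, it is the value of the path following any action of the support. *)
Lemma Nash_stretch_value j g : (size g + j)%N = T ->
  (forall x, (size x < j)%N -> NashMP u1 u2 (m1 (g ++ x)) (m2 (g ++ x))) ->
  exists ps : seq prof, [/\ size ps = j, (forall p, p \in ps -> NashP p) &
    value u1 m1 m2 j g = \sum_(p <- ps) EU u1 p].
Proof.
elim: j g => [|j IH] g Hs HN; first by exists [::]; rewrite big_nil.
have Hk : (T - size g)%N = j.+1 by rewrite -Hs addKn.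
have Hg : NashMP u1 u2 (m1 g) (m2 g) by have := HN [::] isT; rewrite cats0.
have ms : is_mixed (m1 g) by case: Hg.
pose F b := u1 b (m2 g) + value u1 m1 m2 j (rcons g (b, m2 g)).
have [b bs] := supp_nonempty ms.
have Eb := mixed_supp_eq ms (one_shot1 Hk) bs.
have [|x hx|ps [sz Np Ev]] := IH (rcons g (b, m2 g)); first by rewrite size_rcons addSnnS.
  by rewrite cat_rcons; apply: HN.
exists ((m1 g, m2 g) :: ps); split; first by rewrite /= sz.
  by move=> p; rewrite inE => /orP [/eqP -> //|/Np].
rewrite big_cons -Ev [LHS]/= -Eb; congr (_ + _).
exact: (br1_supp ms Hg.2.1 bs).
Qed.

Section LastDeviation.
Variables (h : hist) (k : nat).
Hypothesis rounds_left : (T - size h)%N = k.+1.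
Hypothesis later_Nash : forall z x, (size x < k)%N ->
  NashMP u1 u2 (m1 (rcons h z ++ x)) (m2 (rcons h z ++ x)).
Hypothesis deviation : ~ NashMP u1 u2 (m1 h) (m2 h).

Let h_mixed : is_mixed (m1 h). Proof. exact: spe.1. Qed.

(* h is not the last round, so some stage Nash profile exists. *)
Lemma Nash_exists : exists N, NashP N.
Proof.
case: k rounds_left later_Nash => [last _|k' _ HN].
  by case: deviation; apply: last_round_Nash.
have [a _] := supp_nonempty h_mixed.
exists (m1 (rcons h (a, m2 h)), m2 (rcons h (a, m2 h))).
by have := HN (a, m2 h) [::] isT; rewrite cats0.
Qed.

Lemma const_continuation (u : A1 -> A2 -> R) : card_eq1 (Vmp u u1 u2) ->
  exists c, forall z, value u m1 m2 k (rcons h z) = c.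
Proof.
move=> /eq1_const [v Hv]; exists (k%:R * v) => z.
exact: (value_unique_Nash Hv (later_Nash z)).
Qed.

Lemma br1_at_deviation : card_eq1 (Vmp u1 u1 u2) -> br1 u1 (m1 h) (m2 h).
Proof.
move=> /const_continuation [c E]; apply: pure_br1 => b.
move: (one_shot1 rounds_left b); rewrite /= E.
by under eq_bigr do rewrite E mulrDr; rewrite big_split /= mixed_const // lerD2r.
Qed.

Lemma br2_at_deviation : card_eq1 (Vmp u2 u1 u2) -> br2 u2 (m1 h) (m2 h).
Proof.
move=> /const_continuation [c E] y; move: (one_shot2 rounds_left y).
under eq_bigr do rewrite E mulrDr; rewrite /=.
by under [in X in _ <= X -> _]eq_bigr do rewrite E mulrDr;
  rewrite !big_split /= !mixed_const // lerD2r.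
Qed.

(* Support actions at h yield equal totals, so their stage payoff difference
   is a difference of two sums of k Nash payoffs. *)
Lemma support_diff_sum a a' : a \in supp (m1 h) -> a' \in supp (m1 h) ->
  exists ds : seq R, (forall i, (i < size ds)%N -> Dset u1 u2 (nth 0 ds i)) /\
    u1 a (m2 h) - u1 a' (m2 h) = \sum_(d <- ds) d.
Proof.
move=> asupp a'supp.
have Ea := mixed_supp_eq h_mixed (one_shot1 rounds_left) asupp.
have Ea' := mixed_supp_eq h_mixed (one_shot1 rounds_left) a'supp.
have sz z : (size (rcons h z) + k)%N = T by rewrite size_rcons; lia.
have [pa [sza Npa Eva]] := Nash_stretch_value (sz (a, m2 h)) (later_Nash (a, m2 h)).
have [pa' [sza' Npa' Eva']] := Nash_stretch_value (sz (a', m2 h)) (later_Nash (a', m2 h)).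
exists [seq EU u1 x.1 - EU u1 x.2 | x <- zip pa' pa]; split.
  move=> i; rewrite size_map size_zip sza sza' minnn => hi.
  have [d _] := Nash_exists.
  rewrite (nth_map (d, d)) ?size_zip ?sza ?sza' ?minnn // nth_zip ?sza ?sza' //=.
  exists (nth d pa' i).1, (nth d pa' i).2, (nth d pa i).1, (nth d pa i).2.
  by split; [apply/Npa'/mem_nth; rewrite sza' | split; [apply/Npa/mem_nth; rewrite sza|]].
rewrite big_map sum_zip_diff ?sza ?sza' // -Eva -Eva'.
by move: Ea' Ea => /= <-; lra.
Qed.

(* Case analysis on the sizes of V_1 and V_2; two singletons would make the
   profile at h a stage Nash equilibrium. *)
Lemma last_deviation_cond : cond1 u1 u2 \/ cond2 u1 u2 \/ cond3 u1 u2.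
Proof.
have [N NN] := Nash_exists.
have V u : exists v, Vmp u u1 u2 v by exists (EU u N), N.1, N.2.
case: (card_gt1_or_eq1 (V u1)) => [G1|E1]; case: (card_gt1_or_eq1 (V u2)) => [G2|E2].
- by left; do 2!split => //; exists (m1 h), (m2 h).
- right; left; do 2!split => //.
  have [a1' lt] : exists a1', eu u1 (m1 h) (m2 h) < u1 a1' (m2 h).
    apply: NNPP => N1; apply: deviation; split=> //; split; last exact: br2_at_deviation.
    by apply: pure_br1 => b; rewrite leNgt; apply/negP => L; apply: N1; exists b.
  exists (m1 h), a1', (m2 h); do !split => //; first exact: br2_at_deviation.
  have [a asupp] := supp_nonempty h_mixed.
  by move=> _; exists a => // a' a'supp _; apply: support_diff_sum.
- right; right; do 2!split => //.
  have [y lt] : exists y, eu u2 (m1 h) (m2 h) < eu u2 (m1 h) y.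
    apply: NNPP => N2; apply: deviation; split=> //; split; first exact: br1_at_deviation.
    by move=> y; rewrite leNgt; apply/negP => L; apply: N2; exists y.
  by exists (m1 h), (m2 h), y; do !split => //; apply: br1_at_deviation.
- by case: deviation; split => //; split; [apply: br1_at_deviation | apply: br2_at_deviation].
Qed.
End LastDeviation.
End SubgamePerfect.

Lemma necessity : subopt_SPE_exists -> cond1 u1 u2 \/ cond2 u1 u2 \/ cond3 u1 u2.
Proof.
move=> [T [_ [m1 [m2 [spe dev]]]]].
have [h [sh [nh later]]] := maximal_history dev.
have [k Hk] : exists k, (T - size h)%N = k.+1 by exists (T - size h).-1; lia.
apply: (last_deviation_cond spe Hk _ nh) => z x hx.
by rewrite cat_rcons; apply: later => //; rewrite size_cat /=; lia.
Qed.

End Game.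

Theorem mainTheorem6 (R : realType) (A1 A2 : finType)
  (hA1 : (0 < #|A1|)%N) (hA2 : (0 < #|A2|)%N) (u1 u2 : A1 -> A2 -> R) :
  (exists T : nat, (0 < T)%N /\
     exists (m1 : strat1 R A1 A2) (m2 : strat2 A1 A2),
       SPE u1 u2 T m1 m2 /\ loc_subopt u1 u2 T m1 m2)
  <-> (cond1 u1 u2 \/ cond2 u1 u2 \/ cond3 u1 u2).
Proof.
split; first exact: necessity.
by case=> [/cond1_sufficient|[/cond2_sufficient|/cond3_sufficient]].
Qed.
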